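(* Under the utility optimization algorithm described in the context, let $r_a^b(\tau)=\frac1\tau\sum_{t=0}^{\tau-1}R_a^b(t)$. Then $$\liminf_{\tau\to\infty}\sum_{a,b\in\mathcal{N}}U_a^b\big(r_a^b(\tau)\big)\;\ge\;U_{tot}(\vec r^{\,*})-\frac{\tilde B}{V},$$ where $U_{tot}(\vec r^{\,*})=\sum_{a,b}U_a^b(r_a^{b*})$ is the optimal network utility achievable by any control policy satisfying the key and queue dynamics, the key availability constraint and network stability, and $\tilde B=B+N^2\gamma d_{max}\mu_{max}$ with $B=N^2\big(\tfrac32d_{max}^2\mu_{max}^2+R_{max}^2\big)+\tfrac L2(P_{max}+K_{max})^2$.
   Context: Network: a graph $G=(\mathcal{N},\mathcal{L})$ with $N=|\mathcal{N}|$ nodes and $L=|\mathcal{L}|$ directed links $l_{[a,c]}$; $\mathcal{N}_a^{in}$ ($\mathcal{N}_a^{out}$) is the set of nodes with a link into (out of) $a$; $d_{max}=\max_a\max(|\mathcal{N}_a^{in}|,|\mathcal{N}_a^{out}|)$. Time is slotted. Per link: key generated per slot $K_{[a,c]}\le K_{max}$ when $S_{[a,c]}(t)=1$; key consumed $P_{[a,c]}(t)\in[0,P_{max}]$; stored key $E_{[a,c]}(t+1)=E_{[a,c]}(t)-P_{[a,c]}(t)+S_{[a,c]}(t)K_{[a,c]}$, $E(0)=0$, constraint $E_{[a,c]}(t)\ge P_{[a,c]}(t)$; rate $\mu_{[a,c]}(t)=\mu_{[a,c]}(P_{[a,c]}(t))\le\mu_{max}$, $\mu_{[a,c]}(P)\le\delta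 P$ for a constant $\delta>0$, split as $\sum_b\mu^b_{[a,c]}(t)$ over types (type-$b$ = destined to $b$). Queues: $Q_a^b(t+1)=Q_a^b(t)+R_a^b(t)+\sum_{c\in\mathcal{N}_a^{in}}\mu^b_{[c,a]}(t)-\sum_{c\in\mathcal{N}_a^{out}}\mu^b_{[a,c]}(t)$, $Q(0)=0$, admitted data $R_a^b(t)\in[0,R_{max}]$. Stability means $\limsup_{t\to\infty}\frac1t\sum_{\tau<t}\sum_{a,b}Q_a^b(\tau)<\infty$. Utilities $U_a^b$ concave nondecreasing, $\beta=\max_{a,b}(U_a^b)'(0)$. Parameters: $V>0$, $\gamma=R_{max}+d_{max}\mu_{max}$, $\theta_{[a,c]}=\delta\beta V+P_{max}$. Weights $W^b_{[a,c]}(t)=\max(Q_a^b(t)-Q_c^b(t)-\gamma,0)$, $W_{[a,c]}(t)=\max_bW^b_{[a,c]}(t)$. Algorithm, each slot $t$: (1) $S_{[a,c]}(t)=1$ iff $E_{[a,c]}(t)<\theta_{[a,c]}$; (2) $R_a^b(t)\in[0,R_{max}]$ maximizes $VU_a^b(R)-Q_a^b(t)R$; (3) $\vec P(t)$ maximizes $\sum_{l_{[a,c]}}\{\mu_{[a,c]}(P_{[a,c]})W_{[a,c]}(t)+(E_{[a,c]}(t)-\theta_{[a,c]})P_{[a,c]}\}$ subject to $E_{[a,c]}(t)\ge P_{[a,c]}$; (4) for $b^*\in\arg\max_bW^b_{[a,c]}(t)$, if $W^{b^*}_{[a,c]}(t)>0$ set $\mu^{b^*}_{[a,c]}(t)=\mu_{[a,c]}(t)$,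 others zero; (5) update by the dynamics. *)

From Stdlib Require Import Reals Lra List Arith.
Import ListNotations.
Open Scope R_scope.

Definition sumR {A : Type} (l : list A) (f : A -> R) : R :=
  fold_right (fun x acc => f x + acc) 0 l.

(* Data of the network and of the model.  Nodes are 0 .. nN-1; a directed
   link l_[a,c] is the pair (a,c). *)
Record Net := mkNet {
  nN    : nat;
  links : list (nat * nat);
  Kgen  : nat * nat -> R;
  Kmax  : R;
  Pmax  : R;
  mu    : nat * nat -> R -> R;
  mumax : R;
  delta : R;
  R_max : R;
  U     : nat -> nat -> R -> R
}.

Definition nodes (n : Net) : list nat := seq 0 (nN n).
Definition Lnum (n : Net) : nat := length (links n).

Definition indeg (n : Net) (a : nat) : nat :=
  length (filter (fun l => Nat.eqb (snd l) a) (links n)).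
Definition outdeg (n : Net) (a : nat) : nat :=
  length (filter (fun l => Nat.eqb (fst l) a) (links n)).
Definition dmax (n : Net) : nat :=
  fold_right Nat.max 0%nat (map (fun a => Nat.max (indeg n a) (outdeg n a)) (nodes n)).

Definition concave_on_nonneg (f : R -> R) : Prop :=
  forall x y lam, 0 <= x -> 0 <= y -> 0 <= lam <= 1 ->
    lam * f x + (1 - lam) * f y <= f (lam * x + (1 - lam) * y).
Definition nondecr_on_nonneg (f : R -> R) : Prop :=
  forall x y, 0 <= x -> x <= y -> f x <= f y.

Definition right_deriv (f : R -> R) (x d : R) : Prop :=
  forall eps, 0 < eps -> exists del, 0 < del /\
    forall h, 0 < h < del -> Rabs ((f (x + h) - f x) / h - d) < eps.

Definition valid_net (n : Net) : Prop :=
  NoDup (links n) /\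
  (forall a c, In (a, c) (links n) -> (a < nN n)%nat /\ (c < nN n)%nat /\ a <> c) /\
  0 <= Kmax n /\ 0 <= Pmax n /\ 0 <= mumax n /\ 0 < delta n /\ 0 <= R_max n /\
  (forall l, In l (links n) -> 0 <= Kgen n l <= Kmax n) /\
  (forall l P, In l (links n) -> 0 <= P <= Pmax n ->
     0 <= mu n l P /\ mu n l P <= mumax n /\ mu n l P <= delta n * P) /\
  (forall a b, (a < nN n)%nat -> (b < nN n)%nat ->
     concave_on_nonneg (U n a b) /\ nondecr_on_nonneg (U n a b)).

Definition is_beta (n : Net) (beta : R) : Prop :=
  (forall a b, (a < nN n)%nat -> (b < nN n)%nat ->
     exists d, right_deriv (U n a b) 0 d /\ d <= beta) /\
  (exists a b, (a < nN n)%nat /\ (b < nN n)%nat /\ right_deriv (U n a b) 0 beta).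

Record Traj := mkTraj {
  E   : nat * nat -> nat -> R;
  Sk  : nat * nat -> nat -> R;
  P   : nat * nat -> nat -> R;
  mub : nat * nat -> nat -> nat -> R;   (* mu^b_l(t) : link, type b, time *)
  Q   : nat -> nat -> nat -> R;
  Radm : nat -> nat -> nat -> R
}.

Definition inflow (n : Net) (tr : Traj) (a b t : nat) : R :=
  sumR (filter (fun l => Nat.eqb (snd l) a) (links n)) (fun l => mub tr l b t).
Definition outflow (n : Net) (tr : Traj) (a b t : nat) : R :=
  sumR (filter (fun l => Nat.eqb (fst l) a) (links n)) (fun l => mub tr l b t).

Definition key_dynamics (n : Net) (tr : Traj) : Prop :=
  forall l, In l (links n) ->
    E tr l 0 = 0 /\
    forall t, E tr l (S t) = E tr l t - P tr l t + Sk tr l t * Kgen n l.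

(* Queue dynamics; by convention the queue of type-b data at its destination b
   is identically zero (delivered data leaves the network). *)
Definition queue_dynamics (n : Net) (tr : Traj) : Prop :=
  forall a b, (a < nN n)%nat -> (b < nN n)%nat ->
    Q tr a b 0 = 0 /\
    forall t,
      (a = b -> Q tr a b t = 0) /\
      (a <> b -> Q tr a b (S t) =
         Q tr a b t + Radm tr a b t + inflow n tr a b t - outflow n tr a b t).

Definition total_queue (n : Net) (tr : Traj) (t : nat) : R :=
  sumR (nodes n) (fun a => sumR (nodes n) (fun b => Q tr a b t)).

(* limsup_{t->oo} (1/t) sum_{tau<t} sum_{a,b} Q_a^b(tau) < oo *)
Definition stable (n : Net) (tr : Traj) : Prop :=
  exists M T, forall t, (T <= t)%nat -> (0 < t)%nat ->
    / INR t * sumR (seq 0 t) (fun tau => total_queue n tr tau) <= M.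

Definition feasible_policy (n : Net) (tr : Traj) : Prop :=
  key_dynamics n tr /\ queue_dynamics n tr /\
  (forall l t, In l (links n) ->
     (Sk tr l t = 0 \/ Sk tr l t = 1) /\
     0 <= P tr l t <= Pmax n /\
     P tr l t <= E tr l t /\
     (forall b, (b < nN n)%nat -> 0 <= mub tr l b t) /\
     sumR (nodes n) (fun b => mub tr l b t) = mu n l (P tr l t)) /\
  (forall a b t, (a < nN n)%nat -> (b < nN n)%nat ->
     0 <= Radm tr a b t <= R_max n /\ 0 <= Q tr a b t) /\
  stable n tr.

Definition gamma (n : Net) : R := R_max n + INR (dmax n) * mumax n.
Definition theta (n : Net) (beta V : R) : R := delta n * beta * V + Pmax n.

Definition Wb (n : Net) (tr : Traj) (l : nat * nat) (b t : nat) : R :=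
  Rmax (Q tr (fst l) b t - Q tr (snd l) b t - gamma n) 0.
Definition Wl (n : Net) (tr : Traj) (l : nat * nat) (t : nat) : R :=
  fold_right Rmax 0 (map (fun b => Wb n tr l b t) (nodes n)).

Definition P_admissible (n : Net) (tr : Traj) (t : nat) (Pv : nat * nat -> R) : Prop :=
  forall l, In l (links n) -> 0 <= Pv l <= Pmax n /\ Pv l <= E tr l t.

Definition P_objective (n : Net) (tr : Traj) (beta V : R) (t : nat)
  (Pv : nat * nat -> R) : R :=
  sumR (links n) (fun l =>
    mu n l (Pv l) * Wl n tr l t + (E tr l t - theta n beta V) * Pv l).

Definition follows_algorithm (n : Net) (beta V : R) (tr : Traj) : Prop :=
  key_dynamics n tr /\ queue_dynamics n tr /\
  forall t,
    (* (1) key generation *)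
    (forall l, In l (links n) ->
       (E tr l t < theta n beta V -> Sk tr l t = 1) /\
       (theta n beta V <= E tr l t -> Sk tr l t = 0)) /\
    (* (2) admission control *)
    (forall a b, (a < nN n)%nat -> (b < nN n)%nat ->
       0 <= Radm tr a b t <= R_max n /\
       forall R', 0 <= R' <= R_max n ->
         V * U n a b R' - Q tr a b t * R' <=
         V * U n a b (Radm tr a b t) - Q tr a b t * Radm tr a b t) /\
    (* (3) key consumption / power allocation *)
    (P_admissible n tr t (fun l => P tr l t) /\
     forall Pv, P_admissible n tr t Pv ->
       P_objective n tr beta V t Pv <= P_objective n tr beta V t (fun l => P tr l t)) /\
    (* (4) routing *)
    (forall l, In l (links n) ->
       exists bs, (bs < nN n)%nat /\
         (forall b, (b < nN n)%nat -> Wb n tr l b t <= Wb n tr l bs t) /\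
         (0 < Wb n tr l bs t ->
            mub tr l bs t = mu n l (P tr l t) /\
            forall b, (b < nN n)%nat -> b <> bs -> mub tr l b t = 0) /\
         (Wb n tr l bs t <= 0 -> forall b, (b < nN n)%nat -> mub tr l b t = 0)).

Definition avg_rate (tr : Traj) (a b tau : nat) : R :=
  / INR tau * sumR (seq 0 tau) (fun t => Radm tr a b t).

Definition total_utility (n : Net) (r : nat -> nat -> R) : R :=
  sumR (nodes n) (fun a => sumR (nodes n) (fun b => U n a b (r a b))).

Definition Bconst (n : Net) : R :=
  INR (nN n) ^ 2 * (3 / 2 * INR (dmax n) ^ 2 * mumax n ^ 2 + R_max n ^ 2)
  + INR (Lnum n) / 2 * (Pmax n + Kmax n) ^ 2.
Definition Btilde (n : Net) : R :=
  Bconst n + INR (nN n) ^ 2 * gamma n * INR (dmax n) * mumax n.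

From Stdlib Require Import Reals List Arith.
From Stdlib Require Import Lra Lia Psatz Classical.
Open Scope R_scope.

(* With L(t) = 1/2 sum Q_a^b(t)^2 + 1/2 sum_l (E_l(t) - theta_l)^2 one shows
   L(t+1) - L(t) <= B + sum Q (R + in - out) + sum_l (E_l - theta_l)(S_l K_l - P_l).
   The queues of the algorithm stay within [0, V beta + gamma], so every rule of
   the algorithm minimises its part of this bound up to the slack L gamma mumax
   <= N^2 dmax gamma mumax.  Comparing, slot by slot, with the decisions of an
   arbitrary feasible policy averaged over a window [0, m) gives
     drift - V sum U(R(t)) <= Btilde + (V beta + gamma) Q'(m)/m - V U_tot(r'(m)).
   Telescoping over tau slots and Jensen's inequality bound the utility of the
   algorithm's average rates.  Finally stability of the policy and convergence
   of its rates to r* provide a window m with small backlog and near-optimal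
   utility, and the transient L(0)/(V tau) vanishes. *)

Lemma sumR_cons {A} (x : A) l f : sumR (x :: l) f = f x + sumR l f.
Proof. reflexivity. Qed.

Lemma sumR_app {A} (l1 l2 : list A) f : sumR (l1 ++ l2) f = sumR l1 f + sumR l2 f.
Proof. induction l1 as [|x l1 IH]; simpl; [|rewrite IH]; lra. Qed.

Lemma sumR_ext {A} (l : list A) f g :
  (forall x, In x l -> f x = g x) -> sumR l f = sumR l g.
Proof.
  induction l as [|x l IH]; intros H; simpl; [reflexivity|].
  rewrite H, IH; auto with datatypes.
Qed.

Lemma sumR_le {A} (l : list A) f g :
  (forall x, In x l -> f x <= g x) -> sumR l f <= sumR l g.
Proof.
  induction l as [|x l IH]; intros H; simpl; [lra|].
  apply Rplus_le_compat; auto with datatypes.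
Qed.

Lemma sumR_plus {A} (l : list A) f g :
  sumR l (fun x => f x + g x) = sumR l f + sumR l g.
Proof. induction l as [|x l IH]; simpl; [|rewrite IH]; lra. Qed.

Lemma sumR_minus {A} (l : list A) f g :
  sumR l (fun x => f x - g x) = sumR l f - sumR l g.
Proof. induction l as [|x l IH]; simpl; [|rewrite IH]; lra. Qed.

Lemma sumR_scal {A} (l : list A) c f : sumR l (fun x => c * f x) = c * sumR l f.
Proof. induction l as [|x l IH]; simpl; [|rewrite IH]; lra. Qed.

Lemma sumR_const {A} (l : list A) c : sumR l (fun _ => c) = INR (length l) * c.
Proof.
  induction l as [|x l IH]; simpl length; simpl sumR; [simpl; lra|].
  rewrite IH, S_INR; lra.
Qed.

Lemma sumR_nonneg {A} (l : list A) f :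
  (forall x, In x l -> 0 <= f x) -> 0 <= sumR l f.
Proof.
  intros H. replace 0 with (sumR l (fun _ => 0)) by (rewrite sumR_const; lra).
  apply sumR_le; auto.
Qed.

Lemma sumR_swap {A B} (l1 : list A) (l2 : list B) f :
  sumR l1 (fun x => sumR l2 (fun y => f x y)) =
  sumR l2 (fun y => sumR l1 (fun x => f x y)).
Proof.
  induction l1 as [|x l1 IH]; simpl.
  - rewrite (sumR_const l2 0). lra.
  - rewrite IH, <- sumR_plus. reflexivity.
Qed.

Lemma sumR_seqS f t : sumR (seq 0 (S t)) f = sumR (seq 0 t) f + f t.
Proof. rewrite seq_S, sumR_app. simpl. lra. Qed.

Lemma sumR_single (l : list nat) (k : nat) c :
  NoDup l -> In k l -> sumR l (fun a => if Nat.eqb k a then c else 0) = c.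
Proof.
  induction l as [|a l IH]; intros Hd Hi; [destruct Hi|].
  inversion Hd as [|? ? Hna Hdl]; subst. simpl.
  destruct (Nat.eqb k a) eqn:Eka.
  - apply Nat.eqb_eq in Eka; subst.
    rewrite (sumR_ext _ _ (fun _ => 0)), sumR_const; [lra|].
    intros x Hx. destruct (Nat.eqb a x) eqn:Eax; auto.
    apply Nat.eqb_eq in Eax; subst; contradiction.
  - destruct Hi as [->|Hi]; [rewrite Nat.eqb_refl in Eka; discriminate|].
    rewrite IH; auto; lra.
Qed.

Lemma sumR_partition {A} (key : A -> nat) (ls : list A) (ns : list nat) g :
  NoDup ns -> (forall x, In x ls -> In (key x) ns) ->
  sumR ns (fun a => sumR (filter (fun x => Nat.eqb (key x) a) ls) g) = sumR ls g.
Proof.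
  intros Hd. induction ls as [|x ls IH]; intros Hk.
  - simpl. rewrite sumR_const; lra.
  - rewrite sumR_cons, <- IH by auto with datatypes.
    rewrite (sumR_ext _ _ (fun a => (if Nat.eqb (key x) a then g x else 0) +
       sumR (filter (fun y => Nat.eqb (key y) a) ls) g)).
    + rewrite sumR_plus, sumR_single; auto with datatypes.
    + intros a _. simpl. destruct (Nat.eqb (key x) a); simpl; lra.
Qed.

Definition avg (m : nat) (f : nat -> R) : R := / INR m * sumR (seq 0 m) f.

Lemma avg_plus m f g : avg m (fun s => f s + g s) = avg m f + avg m g.
Proof. unfold avg. rewrite sumR_plus. lra. Qed.

Lemma avg_minus m f g : avg m (fun s => f s - g s) = avg m f - avg m g.
Proof. unfold avg. rewrite sumR_minus. lra. Qed.

Lemma avg_scal m c f : avg m (fun s => c * f s) = c * avg m f.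
Proof. unfold avg. rewrite sumR_scal. lra. Qed.

Lemma avg_const m c : (0 < m)%nat -> avg m (fun _ => c) = c.
Proof.
  intros Hm. unfold avg. rewrite sumR_const, length_seq.
  field. apply not_0_INR; lia.
Qed.

Lemma avg_le m f g :
  (forall s, (s < m)%nat -> f s <= g s) -> avg m f <= avg m g.
Proof.
  intros H. unfold avg. apply Rmult_le_compat_l.
  - destruct m; [simpl; rewrite Rinv_0; lra|].
    left; apply Rinv_0_lt_compat, lt_0_INR; lia.
  - apply sumR_le. intros s Hs. apply in_seq in Hs. apply H; lia.
Qed.

Lemma avg_between m f lo hi : (0 < m)%nat ->
  (forall s, (s < m)%nat -> lo <= f s <= hi) -> lo <= avg m f <= hi.
Proof.
  intros Hm H. rewrite <- (avg_const m lo Hm) at 1. rewrite <- (avg_const m hi Hm).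
  split; apply avg_le; intros s Hs; apply H; auto.
Qed.

Lemma avg_sum {A} m (l : list A) f :
  avg m (fun s => sumR l (fun x => f x s)) = sumR l (fun x => avg m (f x)).
Proof. unfold avg. rewrite sumR_swap, <- sumR_scal. reflexivity. Qed.

Lemma telescope (x g : nat -> R) m :
  x 0%nat = 0 -> (forall s, x (S s) = x s + g s) -> sumR (seq 0 m) g = x m.
Proof.
  intros H0 HS. induction m as [|m IH]; [simpl; lra|].
  rewrite sumR_seqS, IH, HS. lra.
Qed.

(** * Facts about concave utilities *)

Lemma jensen f x m : concave_on_nonneg f -> (forall s, 0 <= x s) -> (0 < m)%nat ->
  avg m (fun s => f (x s)) <= f (avg m x).
Proof.
  intros Hc Hx Hm. unfold avg. induction m as [|m IH]; [lia|].
  destruct m as [|m].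
  - simpl. replace (/ 1 * (f (x 0%nat) + 0)) with (f (x 0%nat)) by field.
    replace (/ 1 * (x 0%nat + 0)) with (x 0%nat) by field. lra.
  - specialize (IH ltac:(lia)). rewrite !(sumR_seqS _ (S m)), (S_INR (S m)).
    set (Sx := sumR (seq 0 (S m)) x) in *.
    set (Sf := sumR (seq 0 (S m)) (fun s => f (x s))) in *.
    set (M := INR (S m)) in *.
    assert (HM : 0 < M) by (apply lt_0_INR; lia).
    assert (HSx : 0 <= / M * Sx).
    { apply Rmult_le_pos; [left; apply Rinv_0_lt_compat; lra|].
      apply sumR_nonneg; auto. }
    (* the new average is the convex combination with weight M/(M+1) *)
    set (lam := M / (M + 1)).
    assert (Hlam : 0 <= lam <= 1).
    { unfold lam. split; [apply Rmult_le_pos; [lra|left; apply Rinv_0_lt_compat; lra]|].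
      apply Rmult_le_reg_r with (M + 1); [lra|].
      unfold Rdiv. rewrite Rmult_assoc, Rinv_l; lra. }
    pose proof (Hc (/ M * Sx) (x (S m)) lam HSx (Hx _) Hlam) as Hcc.
    replace (lam * (/ M * Sx) + (1 - lam) * x (S m)) with (/ (M + 1) * (Sx + x (S m)))
      in Hcc by (unfold lam; field; lra).
    replace (/ (M + 1) * (Sf + f (x (S m))))
      with (lam * (/ M * Sf) + (1 - lam) * f (x (S m))) by (unfold lam; field; lra).
    assert (lam * (/ M * Sf) <= lam * f (/ M * Sx)) by (apply Rmult_le_compat_l; lra).
    lra.
Qed.

Lemma concave_below_tangent f d x : concave_on_nonneg f -> right_deriv f 0 d -> 0 <= x ->
  f x - f 0 <= d * x.
Proof.
  intros Hc Hd Hx. destruct (Req_dec x 0) as [->|Hx0]; [lra|].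
  destruct (Rle_dec (f x - f 0) (d * x)) as [|Hgt]; auto. exfalso.
  (* the chord slope s exceeds d, but chords from 0 have slope >= s near 0 *)
  set (s := (f x - f 0) / x).
  assert (Hs : d < s).
  { unfold s. apply Rmult_lt_reg_r with x; [lra|].
    unfold Rdiv. rewrite Rmult_assoc, Rinv_l; lra. }
  destruct (Hd (s - d) ltac:(lra)) as [del [Hdel Hh]].
  set (h := Rmin (del / 2) (x / 2)).
  assert (Hh0 : 0 < h) by (unfold h; apply Rmin_glb_lt; lra).
  assert (Hh1 : h < del) by (unfold h; eapply Rle_lt_trans; [apply Rmin_l|lra]).
  assert (Hh2 : h <= x / 2) by (unfold h; apply Rmin_r).
  specialize (Hh h ltac:(lra)). rewrite Rplus_0_l in Hh.
  apply Rabs_def2 in Hh as [Hh _].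
  assert (Hl : 0 <= h / x <= 1).
  { split; [apply Rmult_le_pos; [lra|left; apply Rinv_0_lt_compat; lra]|].
    apply Rmult_le_reg_r with x; [lra|].
    unfold Rdiv. rewrite Rmult_assoc, Rinv_l; lra. }
  pose proof (Hc x 0 (h / x) Hx (Rle_refl 0) Hl) as Hcc.
  replace (h / x * x + (1 - h / x) * 0) with h in Hcc by (field; lra).
  assert (Hge : s <= (f h - f 0) / h).
  { unfold s. apply Rmult_le_reg_r with h; [lra|].
    unfold Rdiv at 2. rewrite Rmult_assoc, Rinv_l by lra.
    replace ((f x - f 0) / x * h) with (h / x * f x - h / x * f 0) by (field; lra).
    lra. }
  lra.
Qed.

Lemma right_deriv_nonneg f d : nondecr_on_nonneg f -> right_deriv f 0 d -> 0 <= d.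
Proof.
  intros Hm Hd. destruct (Rle_dec 0 d) as [|Hneg]; auto. exfalso.
  destruct (Hd (- d) ltac:(lra)) as [del [Hdel Hh]].
  specialize (Hh (del / 2) ltac:(lra)). rewrite Rplus_0_l in Hh.
  apply Rabs_def2 in Hh as [Hh _].
  assert (0 <= (f (del / 2) - f 0) / (del / 2)).
  { assert (f 0 <= f (del / 2)) by (apply Hm; lra).
    apply Rmult_le_pos; [lra|left; apply Rinv_0_lt_compat; lra]. }
  lra.
Qed.

(* [eventually_ge u c] says that liminf u >= c: for every tolerance eta,
   u k >= c - eta from some index on. *)
Definition eventually_ge (u : nat -> R) (c : R) : Prop :=
  forall eta, 0 < eta -> exists K, forall k, (K <= k)%nat -> c - eta <= u k.

Lemma eventually_ge_sum {A} (l : list A) (F : nat -> A -> R) (G : A -> R) :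
  (forall x, In x l -> eventually_ge (fun k => F k x) (G x)) ->
  eventually_ge (fun k => sumR l (F k)) (sumR l G).
Proof.
  induction l as [|x l IH]; intros H eta Heta.
  - exists 0%nat. intros. simpl. lra.
  - destruct (H x (or_introl eq_refl) (eta / 2)) as [K1 HK1]; [lra|].
    destruct (IH (fun y Hy => H y (or_intror Hy)) (eta / 2)) as [K2 HK2]; [lra|].
    exists (Nat.max K1 K2). intros k Hk. simpl.
    specialize (HK1 k ltac:(lia)). specialize (HK2 k ltac:(lia)). lra.
Qed.

Lemma concave_eventually_ge (f : R -> R) (u : nat -> R) r :
  concave_on_nonneg f -> nondecr_on_nonneg f ->
  (forall k, 0 <= u k) -> Un_cv u r -> eventually_ge (fun k => f (u k)) (f r).
Proof.
  intros Hc Hm Hu Hcv eta Heta.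
  assert (Hr : 0 <= r).
  { destruct (Rle_dec 0 r) as [|Hneg]; auto. exfalso.
    destruct (Hcv (- r) ltac:(lra)) as [K HK]. specialize (HK K (le_n K)).
    unfold R_dist in HK. apply Rabs_def2 in HK. specialize (Hu K). lra. }
  destruct (Req_dec r 0) as [->|Hr0].
  { exists 0%nat. intros k _. pose proof (Hm 0 (u k) (Rle_refl 0) (Hu k)). lra. }
  (* below r, concavity on [0, r] gives f r - f x <= (r - x)/r * (f r - f 0) *)
  set (D := f r - f 0).
  assert (HD : 0 <= D) by (unfold D; pose proof (Hm 0 r (Rle_refl 0) Hr); lra).
  set (dl := eta * r / (D + 1)).
  assert (Hdl : 0 < dl).
  { unfold dl. apply Rmult_lt_0_compat; [nra|apply Rinv_0_lt_compat; lra]. }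
  destruct (Hcv dl Hdl) as [K HK]. exists K. intros k Hk. specialize (HK k Hk).
  unfold R_dist in HK. apply Rabs_def2 in HK as [HK1 HK2].
  destruct (Rle_dec r (u k)) as [Hle|Hlt].
  { pose proof (Hm r (u k) Hr Hle). lra. }
  set (x := u k) in *. pose proof (Hu k) as Hx. fold x in Hx.
  assert (Hl : 0 <= x / r <= 1).
  { split; [apply Rmult_le_pos; [lra|left; apply Rinv_0_lt_compat; lra]|].
    apply Rmult_le_reg_r with r; [lra|].
    unfold Rdiv. rewrite Rmult_assoc, Rinv_l; lra. }
  pose proof (Hc r 0 (x / r) Hr (Rle_refl 0) Hl) as Hcc.
  replace (x / r * r + (1 - x / r) * 0) with x in Hcc by (field; lra).
  assert (H1 : f r - f x <= (r - x) / r * D).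
  { replace ((r - x) / r * D) with ((1 - x / r) * (f r - f 0)) by (unfold D; field; lra).
    lra. }
  assert (H2 : (r - x) / r * D <= dl / r * D).
  { apply Rmult_le_compat_r; auto. unfold Rdiv.
    apply Rmult_le_compat_r; [left; apply Rinv_0_lt_compat|]; lra. }
  assert (H3 : dl / r * D = eta * (D / (D + 1))) by (unfold dl; field; lra).
  assert (H4 : eta * (D / (D + 1)) <= eta).
  { rewrite <- (Rmult_1_r eta) at 2. apply Rmult_le_compat_l; [lra|].
    apply Rmult_le_reg_r with (D + 1); [lra|].
    unfold Rdiv. rewrite Rmult_assoc, Rinv_l; lra. }
  lra.
Qed.

Lemma vanishing_over_time c eta : 0 < eta ->
  exists T, forall tau, (T <= tau)%nat -> (0 < tau)%nat -> c / INR tau <= eta.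
Proof.
  intros Heta. destruct (INR_unbounded (c / eta)) as [T HT].
  exists T. intros tau HTt Htau.
  assert (Htp : 0 < INR tau) by (apply lt_0_INR; lia).
  assert (INR T <= INR tau) by (apply le_INR; lia).
  apply Rmult_le_reg_r with (INR tau); [lra|].
  unfold Rdiv. rewrite Rmult_assoc, Rinv_l by lra.
  replace c with (eta * (c / eta)) by (field; lra). nra.
Qed.

Lemma bounded_average_small_often (q : nat -> R) :
  (forall t, 0 <= q t) ->
  (exists M T, forall t, (T <= t)%nat -> (0 < t)%nat -> / INR t * sumR (seq 0 t) q <= M) ->
  forall eta K, 0 < eta -> exists m, (K <= m)%nat /\ (0 < m)%nat /\ q m <= eta * INR m.
Proof.
  intros Hq [M [T HM]] eta K Heta. apply NNPP. intros Hno.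
  (* otherwise q t >= eta (t - K - 1) for every t, so the averages diverge *)
  set (K1 := INR (S K)).
  assert (Hlow : forall t, eta * INR t - eta * K1 <= q t).
  { intros t. destruct (le_lt_dec (S K) t) as [Hle|Hlt].
    - assert (eta * INR t < q t).
      { apply Rnot_le_lt. intros Hle'. apply Hno. exists t. repeat split; auto; lia. }
      assert (0 <= K1) by apply pos_INR. nra.
    - assert (INR t < K1) by (apply lt_INR; auto). specialize (Hq t). nra. }
  destruct (INR_unbounded (2 * Rabs M / eta + 2 * K1 + 1)) as [t0 Ht0].
  set (t := Nat.max t0 (Nat.max T 1)).
  assert (Htp : 0 < INR t) by (apply lt_0_INR; unfold t; lia).
  assert (Ht0t : INR t0 <= INR t) by (apply le_INR; unfold t; lia).
  specialize (HM t ltac:(unfold t; lia) ltac:(unfold t; lia)).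
  assert (Hsum : sumR (seq 0 t) (fun s => eta * INR s - eta * K1) <= sumR (seq 0 t) q)
    by (apply sumR_le; intros; apply Hlow).
  assert (Hgauss : forall u, sumR (seq 0 u) INR = INR u * (INR u - 1) / 2).
  { induction u as [|u IH]; [simpl; lra|]. rewrite sumR_seqS, IH, S_INR. lra. }
  rewrite sumR_minus, sumR_scal, Hgauss, sumR_const, length_seq in Hsum.
  assert (Havg : eta * ((INR t - 1) / 2 - K1) <= / INR t * sumR (seq 0 t) q).
  { replace (eta * ((INR t - 1) / 2 - K1))
      with (/ INR t * (eta * (INR t * (INR t - 1) / 2) - INR t * (eta * K1))) by (field; lra).
    apply Rmult_le_compat_l; [left; apply Rinv_0_lt_compat|]; lra. }
  assert (Hbig : 2 * Rabs M < eta * (INR t - 1 - 2 * K1)).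
  { replace (2 * Rabs M) with (eta * (2 * Rabs M / eta)) by (field; lra).
    apply Rmult_lt_compat_l; lra. }
  pose proof (Rle_abs M). lra.
Qed.

Definition dsum (n : Net) (f : nat -> nat -> R) : R :=
  sumR (nodes n) (fun a => sumR (nodes n) (fun b => f a b)).

Lemma in_nodes n a : In a (nodes n) <-> (a < nN n)%nat.
Proof. unfold nodes. rewrite in_seq. lia. Qed.

Lemma dsum_le n f g :
  (forall a b, (a < nN n)%nat -> (b < nN n)%nat -> f a b <= g a b) -> dsum n f <= dsum n g.
Proof.
  intros H. apply sumR_le; intros a Ha; apply sumR_le; intros b Hb.
  apply H; apply in_nodes; auto.
Qed.

Lemma dsum_ext n f g :
  (forall a b, (a < nN n)%nat -> (b < nN n)%nat -> f a b = g a b) -> dsum n f = dsum n g.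
Proof. intros H. apply Rle_antisym; apply dsum_le; intros a b Ha Hb; rewrite H; auto; lra. Qed.

Lemma dsum_plus n f g : dsum n (fun a b => f a b + g a b) = dsum n f + dsum n g.
Proof. unfold dsum. rewrite <- sumR_plus. apply sumR_ext; intros; apply sumR_plus. Qed.

Lemma dsum_minus n f g : dsum n (fun a b => f a b - g a b) = dsum n f - dsum n g.
Proof. unfold dsum. rewrite <- sumR_minus. apply sumR_ext; intros; apply sumR_minus. Qed.

Lemma dsum_scal n c f : dsum n (fun a b => c * f a b) = c * dsum n f.
Proof. unfold dsum. rewrite <- sumR_scal. apply sumR_ext; intros; apply sumR_scal. Qed.

Lemma dsum_const n c : dsum n (fun _ _ => c) = INR (nN n) ^ 2 * c.
Proof.
  unfold dsum, nodes. rewrite (sumR_ext _ _ (fun _ => INR (nN n) * c)).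
  - rewrite sumR_const, length_seq. ring.
  - intros. rewrite sumR_const, length_seq. reflexivity.
Qed.

Lemma avg_dsum n m f :
  avg m (fun s => dsum n (fun a b => f a b s)) = dsum n (fun a b => avg m (f a b)).
Proof. unfold dsum. rewrite avg_sum. apply sumR_ext; intros. apply avg_sum. Qed.

Lemma fold_Rmax_ub {A} (g : A -> R) l x : In x l -> g x <= fold_right Rmax 0 (map g l).
Proof.
  induction l as [|y l IH]; simpl; [intros []|]. intros [->|H]; [apply Rmax_l|].
  eapply Rle_trans; [apply IH; auto|apply Rmax_r].
Qed.

Lemma fold_Rmax_lub {A} (g : A -> R) l c : 0 <= c -> (forall x, In x l -> g x <= c) ->
  fold_right Rmax 0 (map g l) <= c.
Proof. induction l as [|y l IH]; simpl; intros H0 H; auto. apply Rmax_lub; auto. Qed.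

Lemma fold_Rmax_nonneg {A} (g : A -> R) l : 0 <= fold_right Rmax 0 (map g l).
Proof. induction l as [|y l IH]; simpl; [lra|]. eapply Rle_trans; [apply IH|apply Rmax_r]. Qed.

Lemma le_fold_max {A} (f : A -> nat) l x :
  In x l -> (f x <= fold_right Nat.max 0 (map f l))%nat.
Proof. induction l as [|y l IH]; simpl; [intros []|]. intros [->|H]; [|specialize (IH H)]; lia. Qed.

Lemma degrees_le n a : (a < nN n)%nat -> (indeg n a <= dmax n)%nat /\ (outdeg n a <= dmax n)%nat.
Proof.
  intros Ha. unfold dmax.
  pose proof (le_fold_max (fun a => Nat.max (indeg n a) (outdeg n a)) (nodes n) a
    (proj2 (in_nodes n a) Ha)) as Hle.
  cbv beta in Hle. lia.
Qed.

Lemma flow_regroup n (key : nat * nat -> nat) (q : nat -> nat -> R) (x : nat * nat -> nat -> R) :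
  (forall l, In l (links n) -> (key l < nN n)%nat) ->
  dsum n (fun a b => q a b * sumR (filter (fun l => Nat.eqb (key l) a) (links n)) (fun l => x l b)) =
  sumR (links n) (fun l => sumR (nodes n) (fun b => x l b * q (key l) b)).
Proof.
  intros Hk. unfold dsum. rewrite sumR_swap, (sumR_swap (links n)).
  apply sumR_ext. intros b _.
  rewrite <- (sumR_partition key (links n) (nodes n) (fun l => x l b * q (key l) b)).
  - apply sumR_ext. intros a _. rewrite <- sumR_scal. apply sumR_ext.
    intros l Hl. apply filter_In in Hl as [_ He]. apply Nat.eqb_eq in He. rewrite He. lra.
  - apply seq_NoDup.
  - intros l Hl. apply in_nodes. auto.
Qed.

Section ValidNet.
Variable n : Net.
Hypothesis Hn : valid_net n.

Lemma link_ends l : In l (links n) -> (fst l < nN n)%nat /\ (snd l < nN n)%nat.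
Proof.
  destruct l as [c d]. intros Hl. destruct Hn as [_ [Hv _]].
  destruct (Hv c d Hl) as [? [? _]]. auto.
Qed.

Lemma Pmax_nonneg : 0 <= Pmax n.
Proof. apply Hn. Qed.

Lemma mumax_nonneg : 0 <= mumax n.
Proof. apply Hn. Qed.

Lemma Rmax_nonneg : 0 <= R_max n.
Proof. apply Hn. Qed.

Lemma Kgen_bounds l : In l (links n) -> 0 <= Kgen n l <= Kmax n.
Proof. apply Hn. Qed.

Lemma mu_bounds l p : In l (links n) -> 0 <= p <= Pmax n ->
  0 <= mu n l p /\ mu n l p <= mumax n /\ mu n l p <= delta n * p.
Proof. apply Hn. Qed.

Lemma U_concave a b : (a < nN n)%nat -> (b < nN n)%nat -> concave_on_nonneg (U n a b).
Proof. intros Ha Hb. apply Hn; auto. Qed.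

Lemma U_nondecr a b : (a < nN n)%nat -> (b < nN n)%nat -> nondecr_on_nonneg (U n a b).
Proof. intros Ha Hb. apply Hn; auto. Qed.

Lemma beta_nonneg beta : is_beta n beta -> 0 <= beta.
Proof.
  intros [_ [a [b [Ha [Hb Hd]]]]].
  exact (right_deriv_nonneg _ _ (U_nondecr a b Ha Hb) Hd).
Qed.

Lemma gamma_bounds :
  0 <= INR (dmax n) * mumax n /\ R_max n <= gamma n /\ INR (dmax n) * mumax n <= gamma n.
Proof.
  pose proof Rmax_nonneg. unfold gamma.
  assert (0 <= INR (dmax n) * mumax n) by (apply Rmult_le_pos; [apply pos_INR|apply mumax_nonneg]).
  lra.
Qed.

(* Counting links by their source: L <= N * dmax <= N^2 * dmax. *)
Lemma Lnum_bound : INR (Lnum n) <= INR (nN n) ^ 2 * INR (dmax n).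
Proof.
  unfold Lnum. rewrite <- (Rmult_1_r (INR (length (links n)))), <- sumR_const.
  rewrite <- (sumR_partition fst (links n) (nodes n) (fun _ => 1)).
  2: apply seq_NoDup.
  2: intros l Hl; apply in_nodes, (link_ends l Hl).
  eapply Rle_trans.
  { apply (sumR_le _ _ (fun _ => INR (dmax n))). intros a Ha. apply in_nodes in Ha.
    rewrite sumR_const, Rmult_1_r. apply le_INR, (degrees_le n a Ha). }
  rewrite sumR_const. unfold nodes. rewrite length_seq.
  assert (INR (nN n) <= INR (nN n) ^ 2).
  { destruct (nN n) as [|k]; [simpl; lra|].
    assert (1 <= INR (S k)) by (apply (le_INR 1); lia). nra. }
  pose proof (pos_INR (dmax n)). nra.
Qed.

Lemma flow_identity (tr : Traj) (q : nat -> nat -> R) s :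
  dsum n (fun a b => q a b * (inflow n tr a b s - outflow n tr a b s)) =
  - sumR (links n) (fun l => sumR (nodes n) (fun b =>
      mub tr l b s * (q (fst l) b - q (snd l) b))).
Proof.
  replace (dsum n (fun a b => q a b * (inflow n tr a b s - outflow n tr a b s)))
    with (dsum n (fun a b => q a b * inflow n tr a b s) - dsum n (fun a b => q a b * outflow n tr a b s))
    by (rewrite <- dsum_minus; apply dsum_ext; intros; ring).
  unfold inflow, outflow.
  rewrite (flow_regroup n snd q (fun l b => mub tr l b s)) by (intros; apply link_ends; auto).
  rewrite (flow_regroup n fst q (fun l b => mub tr l b s)) by (intros; apply link_ends; auto).
  match goal with |- ?In - ?Out = - ?C => enough (C = Out - In) by lra end.
  rewrite <- sumR_minus. apply sumR_ext. intros.
  rewrite <- sumR_minus. apply sumR_ext. intros. ring.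
Qed.

End ValidNet.

(** * Properties of the utility optimization algorithm *)

Section Algorithm.
Variables (n : Net) (beta V : R) (tr : Traj).
Hypothesis Hn : valid_net n.
Hypothesis Hbeta : is_beta n beta.
Hypothesis HV : 0 < V.
Hypothesis Halg : follows_algorithm n beta V tr.

Lemma alg_queue_diag a t : (a < nN n)%nat -> Q tr a a t = 0.
Proof. intros Ha. destruct Halg as [_ [Hq _]]. apply (Hq a a Ha Ha); auto. Qed.

Lemma alg_queue_step a b t : (a < nN n)%nat -> (b < nN n)%nat -> a <> b ->
  Q tr a b (S t) = Q tr a b t + Radm tr a b t + inflow n tr a b t - outflow n tr a b t.
Proof. intros Ha Hb Hab. destruct Halg as [_ [Hq _]]. apply (Hq a b Ha Hb); auto. Qed.

Lemma alg_keygen l t : In l (links n) ->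
  (E tr l t < theta n beta V -> Sk tr l t = 1) /\ (theta n beta V <= E tr l t -> Sk tr l t = 0).
Proof. intros Hl. destruct Halg as [_ [_ H]]. apply (H t); auto. Qed.

Lemma alg_admission a b t : (a < nN n)%nat -> (b < nN n)%nat ->
  0 <= Radm tr a b t <= R_max n /\
  forall R', 0 <= R' <= R_max n ->
    V * U n a b R' - Q tr a b t * R' <= V * U n a b (Radm tr a b t) - Q tr a b t * Radm tr a b t.
Proof. intros Ha Hb. destruct Halg as [_ [_ H]]. apply (H t); auto. Qed.

Lemma alg_power_admissible t : P_admissible n tr t (fun l => P tr l t).
Proof. destruct Halg as [_ [_ H]]. apply (H t). Qed.

Lemma alg_power_optimal t Pv : P_admissible n tr t Pv ->
  P_objective n tr beta V t Pv <= P_objective n tr beta V t (fun l => P tr l t).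
Proof. destruct Halg as [_ [_ H]]. apply (H t). Qed.

Lemma alg_P_bounds l t : In l (links n) -> 0 <= P tr l t <= Pmax n.
Proof. intros Hl. apply (alg_power_admissible t l Hl). Qed.

Lemma alg_rate_cases l b t : In l (links n) -> (b < nN n)%nat ->
  (mub tr l b t = 0 \/ (0 < Wb n tr l b t /\ mub tr l b t = mu n l (P tr l t))) /\
  0 <= mub tr l b t <= mumax n.
Proof.
  intros Hl Hb.
  destruct (mu_bounds n Hn l (P tr l t) Hl (alg_P_bounds l t Hl)) as [Hm1 [Hm2 _]].
  destruct Halg as [_ [_ H]]. destruct (H t) as [_ [_ [_ Hrout]]].
  destruct (Hrout l Hl) as [bs [Hbs [Hmax [Hpos Hneg]]]].
  destruct (Rlt_dec 0 (Wb n tr l bs t)) as [Hw|Hw].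
  - destruct (Hpos Hw) as [E1 E2]. destruct (Nat.eq_dec b bs) as [->|Hne].
    + rewrite E1. split; [right; auto|lra].
    + rewrite (E2 b Hb Hne). split; [left; auto|lra].
  - rewrite (Hneg ltac:(lra) b Hb). split; [left; auto|lra].
Qed.

(* Admission control stops once Q_a^b exceeds V beta, since then Q R exceeds
   the utility gain V (U(R) - U(0)) <= V beta R. *)
Lemma admission_stops a b t : (a < nN n)%nat -> (b < nN n)%nat ->
  V * beta < Q tr a b t -> Radm tr a b t = 0.
Proof.
  intros Ha Hb HQ. destruct (alg_admission a b t Ha Hb) as [HR Hopt].
  pose proof (Hopt 0 ltac:(pose proof (Rmax_nonneg n Hn); lra)) as H0.
  destruct Hbeta as [Hd _]. destruct (Hd a b Ha Hb) as [d [Hrd Hdb]].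
  pose proof (concave_below_tangent _ _ _ (U_concave n Hn a b Ha Hb) Hrd (proj1 HR)) as Htan.
  set (r := Radm tr a b t) in *. set (q := Q tr a b t) in *.
  assert (d * r <= beta * r) by (apply Rmult_le_compat_r; lra).
  assert (V * (U n a b r - U n a b 0) <= V * (beta * r)) by (apply Rmult_le_compat_l; lra).
  nra.
Qed.

Lemma sum_filter_bounds (key : nat * nat -> nat) a (g : nat * nat -> R) c :
  (forall l, In l (links n) -> 0 <= g l <= c) ->
  0 <= sumR (filter (fun l => Nat.eqb (key l) a) (links n)) g <=
       INR (length (filter (fun l => Nat.eqb (key l) a) (links n))) * c.
Proof.
  intros Hg. rewrite <- sumR_const. split.
  - apply sumR_nonneg. intros x Hx. apply filter_In in Hx. apply Hg; tauto.
  - apply sumR_le. intros x Hx. apply filter_In in Hx. apply Hg; tauto.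
Qed.

Lemma flow_bounds a b t : (a < nN n)%nat -> (b < nN n)%nat ->
  0 <= inflow n tr a b t <= INR (dmax n) * mumax n /\
  0 <= outflow n tr a b t <= INR (dmax n) * mumax n.
Proof.
  intros Ha Hb. pose proof (mumax_nonneg n Hn).
  assert (Hg : forall l, In l (links n) -> 0 <= mub tr l b t <= mumax n)
    by (intros l Hl; apply (alg_rate_cases l b t Hl Hb)).
  destruct (degrees_le n a Ha) as [Hin Hout]. apply le_INR in Hin, Hout.
  unfold inflow, outflow, indeg, outdeg in *.
  destruct (sum_filter_bounds snd a _ _ Hg). destruct (sum_filter_bounds fst a _ _ Hg).
  split; split; try lra; eapply Rle_trans; eauto; apply Rmult_le_compat_r; lra.
Qed.

(* Deterministic queue bound: 0 <= Q_a^b(t) <= V beta + gamma.  Below gamma no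
   data leaves (weights vanish), above V beta no data enters. *)
Lemma queue_bounds t a b : (a < nN n)%nat -> (b < nN n)%nat ->
  0 <= Q tr a b t <= V * beta + gamma n.
Proof.
  pose proof (beta_nonneg n Hn beta Hbeta). pose proof (gamma_bounds n Hn) as [Hg1 [Hg2 Hg3]].
  assert (HVb : 0 <= V * beta) by (apply Rmult_le_pos; lra).
  revert a b. induction t as [|t IH]; intros a b Ha Hb.
  - destruct Halg as [_ [Hq _]]. rewrite (proj1 (Hq a b Ha Hb)). lra.
  - destruct (Nat.eq_dec a b) as [<-|Hne]; [rewrite alg_queue_diag; auto; lra|].
    rewrite alg_queue_step by auto.
    destruct (flow_bounds a b t Ha Hb) as [[Hi1 Hi2] [Ho1 Ho2]].
    destruct (alg_admission a b t Ha Hb) as [[HR1 HR2] _].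
    destruct (IH a b Ha Hb) as [Hq1 Hq2].
    assert (Hidle : forall l, In l (links n) ->
      Q tr (fst l) b t - Q tr (snd l) b t <= gamma n -> mub tr l b t = 0).
    { intros l Hl Hdiff. destruct (proj1 (alg_rate_cases l b t Hl Hb)) as [|[Hw _]]; auto.
      unfold Wb, Rmax in Hw. destruct (Rle_dec _ 0); lra. }
    split.
    + destruct (Rle_dec (gamma n) (Q tr a b t)) as [Hge|Hlt]; [lra|].
      assert (outflow n tr a b t = 0); [|lra].
      unfold outflow. rewrite (sumR_ext _ _ (fun _ => 0)), sumR_const; [lra|].
      intros l Hl. apply filter_In in Hl as [Hl He]. apply Nat.eqb_eq in He.
      apply Hidle; auto. rewrite He. pose proof (IH (snd l) b (proj2 (link_ends n Hn l Hl)) Hb). lra.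
    + destruct (Rle_dec (Q tr a b t) (V * beta)) as [Hle|Hgt]; [unfold gamma in *; lra|].
      rewrite (admission_stops a b t Ha Hb ltac:(lra)).
      assert (inflow n tr a b t = 0); [|lra].
      unfold inflow. rewrite (sumR_ext _ _ (fun _ => 0)), sumR_const; [lra|].
      intros l Hl. apply filter_In in Hl as [Hl He]. apply Nat.eqb_eq in He.
      apply Hidle; auto. rewrite He. pose proof (IH (fst l) b (proj1 (link_ends n Hn l Hl)) Hb). lra.
Qed.

Lemma link_weight_bounds l t : In l (links n) -> 0 <= Wl n tr l t <= V * beta.
Proof.
  intros Hl. pose proof (beta_nonneg n Hn beta Hbeta).
  assert (HVb : 0 <= V * beta) by (apply Rmult_le_pos; lra).
  split; [apply fold_Rmax_nonneg|]. apply fold_Rmax_lub; auto.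
  intros b Hb. apply in_nodes in Hb. destruct (link_ends n Hn l Hl).
  pose proof (queue_bounds t (fst l) b ltac:(auto) Hb).
  pose proof (queue_bounds t (snd l) b ltac:(auto) Hb).
  unfold Wb. apply Rmax_lub; lra.
Qed.

Lemma routing_earns_weight l t : In l (links n) ->
  mu n l (P tr l t) * Wl n tr l t <=
  sumR (nodes n) (fun b => mub tr l b t * (Q tr (fst l) b t - Q tr (snd l) b t)).
Proof.
  intros Hl.
  destruct (mu_bounds n Hn l _ Hl (alg_P_bounds l t Hl)) as [Hm _].
  destruct Halg as [_ [_ H]]. destruct (H t) as [_ [_ [_ Hrout]]].
  destruct (Hrout l Hl) as [bs [Hbs [Hmax [Hpos Hneg]]]].
  assert (HW : Wl n tr l t <= Wb n tr l bs t).
  { apply fold_Rmax_lub; [unfold Wb; apply Rmax_r|].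
    intros b Hb. apply Hmax, in_nodes; auto. }
  destruct (Rlt_dec 0 (Wb n tr l bs t)) as [Hw|Hw].
  - (* all of the link rate serves type bs, whose differential is W_l + gamma >= W_l *)
    destruct (Hpos Hw) as [E1 E2].
    rewrite (sumR_ext _ _ (fun b => if Nat.eqb bs b then
       mu n l (P tr l t) * (Q tr (fst l) bs t - Q tr (snd l) bs t) else 0)).
    + rewrite sumR_single by (apply seq_NoDup || apply in_nodes; auto).
      pose proof (gamma_bounds n Hn) as [_ [Hg _]]. pose proof (Rmax_nonneg n Hn).
      unfold Wb, Rmax in HW, Hw. destruct (Rle_dec _ 0); [lra|].
      apply Rmult_le_compat_l; lra.
    + intros b Hb. apply in_nodes in Hb. destruct (Nat.eqb bs b) eqn:Eb.
      * apply Nat.eqb_eq in Eb; subst. rewrite E1; auto.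
      * apply Nat.eqb_neq in Eb. rewrite E2; auto. lra.
  -
    rewrite (sumR_ext _ _ (fun _ => 0)), sumR_const.
    + assert (Wl n tr l t = 0) by (pose proof (fold_Rmax_nonneg (fun b => Wb n tr l b t) (nodes n)); unfold Wl in *; lra).
      rewrite H0. lra.
    + intros b Hb. apply in_nodes in Hb. rewrite (Hneg ltac:(lra) b Hb). lra.
Qed.

(* Rule (3) beats every key consumption vector within [0, Pmax], even one
   violating the key availability constraint: such links only lose objective
   value since mu W <= delta P V beta and theta = delta beta V + Pmax. *)
Lemma power_allocation_dominates t (Pv : nat * nat -> R) :
  (forall l, In l (links n) -> 0 <= Pv l <= Pmax n) ->
  sumR (links n) (fun l => mu n l (Pv l) * Wl n tr l t + (E tr l t - theta n beta V) * Pv l) <=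
  P_objective n tr beta V t (fun l => P tr l t).
Proof.
  intros HPv.
  set (Ptrunc := fun l => if Rle_dec (Pv l) (E tr l t) then Pv l else 0).
  assert (Hadm : P_admissible n tr t Ptrunc).
  { intros l Hl. pose proof (alg_power_admissible t l Hl). pose proof (Pmax_nonneg n Hn).
    specialize (HPv l Hl). unfold Ptrunc. destruct (Rle_dec (Pv l) (E tr l t)); lra. }
  eapply Rle_trans; [|apply (alg_power_optimal t Ptrunc Hadm)].
  apply sumR_le. intros l Hl. unfold Ptrunc. destruct (Rle_dec (Pv l) (E tr l t)); [lra|].
  destruct (HPv l Hl) as [Hp1 Hp2].
  destruct (mu_bounds n Hn l (Pv l) Hl (HPv l Hl)) as [Hm1 [_ Hm3]].
  destruct (mu_bounds n Hn l 0 Hl ltac:(lra)) as [Hz1 [_ Hz3]].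
  replace (mu n l 0) with 0 by lra.
  destruct (link_weight_bounds l t Hl) as [HW1 HW2].
  pose proof (beta_nonneg n Hn beta Hbeta). pose proof (Hn : valid_net n) as [_ [_ [_ [_ [_ [Hd _]]]]]].
  set (w := Wl n tr l t) in *. set (p := Pv l) in *. set (m := mu n l p) in *.
  assert (m * w <= delta n * p * w) by (apply Rmult_le_compat_r; lra).
  assert (delta n * p * w <= delta n * p * (V * beta)) by (apply Rmult_le_compat_l; nra).
  unfold theta. nra.
Qed.

(** ** Lyapunov drift *)

Definition Lyap (t : nat) : R :=
  / 2 * dsum n (fun a b => Q tr a b t ^ 2) +
  / 2 * sumR (links n) (fun l => (E tr l t - theta n beta V) ^ 2).

Lemma Lyap_nonneg t : 0 <= Lyap t.
Proof.
  unfold Lyap.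
  assert (0 <= dsum n (fun a b => Q tr a b t ^ 2)).
  { apply sumR_nonneg; intros; apply sumR_nonneg; intros; apply pow2_ge_0. }
  assert (0 <= sumR (links n) (fun l => (E tr l t - theta n beta V) ^ 2)).
  { apply sumR_nonneg; intros; apply pow2_ge_0. }
  lra.
Qed.

Lemma queue_square_drift a b t : (a < nN n)%nat -> (b < nN n)%nat ->
  / 2 * Q tr a b (S t) ^ 2 - / 2 * Q tr a b t ^ 2 <=
  Q tr a b t * (Radm tr a b t + inflow n tr a b t - outflow n tr a b t) +
  (R_max n ^ 2 + 3 / 2 * (INR (dmax n) * mumax n) ^ 2).
Proof.
  intros Ha Hb. destruct (Nat.eq_dec a b) as [<-|Hne].
  { rewrite !alg_queue_diag by auto. nra. }
  rewrite alg_queue_step by auto.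
  destruct (flow_bounds a b t Ha Hb) as [[Hi1 Hi2] [Ho1 Ho2]].
  destruct (alg_admission a b t Ha Hb) as [[HR1 HR2] _].
  set (r := Radm tr a b t) in *. set (i := inflow n tr a b t) in *.
  set (o := outflow n tr a b t) in *. set (dm := INR (dmax n) * mumax n) in *.
  (* (r + i - o)^2 / 2 <= r^2 + i^2 + o^2 / 2 <= Rmax^2 + 3/2 (dmax mumax)^2 *)
  assert (r * r <= R_max n * R_max n) by nra.
  assert (i * i <= dm * dm) by nra.
  assert (o * o <= dm * dm) by nra.
  assert (r * i * 2 <= r * r + i * i) by (pose proof (pow2_ge_0 (r - i)); nra).
  assert (0 <= (r + i) * o) by nra.
  nra.
Qed.

(* Per-link drift of the key-store deviation; |S K - P| <= Pmax + Kmax. *)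
Lemma key_square_drift l t : In l (links n) ->
  / 2 * (E tr l (S t) - theta n beta V) ^ 2 - / 2 * (E tr l t - theta n beta V) ^ 2 <=
  (E tr l t - theta n beta V) * (Sk tr l t * Kgen n l - P tr l t) + / 2 * (Pmax n + Kmax n) ^ 2.
Proof.
  intros Hl. destruct Halg as [Hkd _]. rewrite (proj2 (Hkd l Hl) t).
  pose proof (alg_P_bounds l t Hl). pose proof (Kgen_bounds n Hn l Hl).
  assert (HS : Sk tr l t = 0 \/ Sk tr l t = 1).
  { destruct (alg_keygen l t Hl) as [G1 G2].
    destruct (Rlt_dec (E tr l t) (theta n beta V)); [right|left]; auto. apply G2; lra. }
  set (x := Sk tr l t * Kgen n l - P tr l t).
  assert (Hx : x * x <= (Pmax n + Kmax n) * (Pmax n + Kmax n)) by (unfold x; destruct HS as [-> | ->]; nra).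
  replace (E tr l t - P tr l t + Sk tr l t * Kgen n l) with (E tr l t + x) by (unfold x; lra).
  nra.
Qed.

Lemma Bconst_split : Bconst n =
  INR (nN n) ^ 2 * (R_max n ^ 2 + 3 / 2 * (INR (dmax n) * mumax n) ^ 2) +
  INR (Lnum n) * (/ 2 * (Pmax n + Kmax n) ^ 2).
Proof. unfold Bconst. field. Qed.

Lemma drift_bound t :
  Lyap (S t) - Lyap t <=
  Bconst n + dsum n (fun a b => Q tr a b t * (Radm tr a b t + inflow n tr a b t - outflow n tr a b t)) +
  sumR (links n) (fun l => (E tr l t - theta n beta V) * (Sk tr l t * Kgen n l - P tr l t)).
Proof.
  pose proof (dsum_le n _ _ (fun a b Ha Hb => queue_square_drift a b t Ha Hb)) as HQ.
  pose proof (sumR_le _ _ _ (fun l Hl => key_square_drift l t Hl)) as HE.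
  rewrite dsum_plus, dsum_const, dsum_minus, !dsum_scal in HQ.
  rewrite sumR_plus, sumR_const, sumR_minus, !sumR_scal in HE.
  rewrite Bconst_split. unfold Lyap, Lnum. lra.
Qed.


Lemma utility_of_average tau : (0 < tau)%nat ->
  avg tau (fun t => dsum n (fun a b => U n a b (Radm tr a b t))) <=
  total_utility n (fun a b => avg_rate tr a b tau).
Proof.
  intros Htau. rewrite avg_dsum. apply dsum_le. intros a b Ha Hb.
  apply (jensen (U n a b) (Radm tr a b) tau (U_concave n Hn a b Ha Hb)); auto.
  intros s. apply (alg_admission a b s Ha Hb).
Qed.

(** * Comparison with an arbitrary feasible policy *)

Section Comparison.
Variable tr' : Traj.
Hypothesis Hfeas : feasible_policy n tr'.

Lemma feas_link l s : In l (links n) ->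
  (Sk tr' l s = 0 \/ Sk tr' l s = 1) /\ 0 <= P tr' l s <= Pmax n /\ P tr' l s <= E tr' l s /\
  (forall b, (b < nN n)%nat -> 0 <= mub tr' l b s) /\
  sumR (nodes n) (fun b => mub tr' l b s) = mu n l (P tr' l s).
Proof. intros Hl. destruct Hfeas as [_ [_ [H _]]]. apply H; auto. Qed.

Lemma feas_pair a b s : (a < nN n)%nat -> (b < nN n)%nat ->
  0 <= Radm tr' a b s <= R_max n /\ 0 <= Q tr' a b s.
Proof. intros Ha Hb. destruct Hfeas as [_ [_ [_ [H _]]]]. apply H; auto. Qed.

Lemma policy_routing_bound l t s : In l (links n) ->
  sumR (nodes n) (fun b => mub tr' l b s * (Q tr (fst l) b t - Q tr (snd l) b t)) <=
  mu n l (P tr' l s) * (Wl n tr l t + gamma n).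
Proof.
  intros Hl. destruct (feas_link l s Hl) as [_ [_ [_ [Hm Hsum]]]].
  rewrite <- Hsum, Rmult_comm, <- sumR_scal. apply sumR_le. intros b Hb.
  pose proof (Hm b (proj1 (in_nodes n b) Hb)).
  assert (Q tr (fst l) b t - Q tr (snd l) b t <= Wl n tr l t + gamma n).
  { pose proof (fold_Rmax_ub (fun b => Wb n tr l b t) (nodes n) b Hb).
    pose proof (Rmax_l (Q tr (fst l) b t - Q tr (snd l) b t - gamma n) 0).
    unfold Wl, Wb in *. lra. }
  rewrite Rmult_comm. apply Rmult_le_compat_r; lra.
Qed.

(* Key availability forces the policy's long-run consumption below K_l:
   its stored key E(m) = sum (S K - P) stays nonnegative. *)
Lemma policy_key_rate m l : (0 < m)%nat -> In l (links n) ->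
  0 <= avg m (P tr' l) <= Kgen n l.
Proof.
  intros Hm Hl. pose proof (Kgen_bounds n Hn l Hl).
  assert (Hp : 0 <= avg m (P tr' l) <= Pmax n)
    by (apply avg_between; auto; intros s _; apply (feas_link l s Hl)).
  split; [apply Hp|].
  destruct Hfeas as [Hkd _]. destruct (Hkd l Hl) as [HE0 HES].
  assert (Hsum : sumR (seq 0 m) (fun s => Sk tr' l s * Kgen n l - P tr' l s) = E tr' l m)
    by (apply telescope; auto; intros s; rewrite HES; lra).
  assert (Hstore : 0 <= avg m (fun s => Sk tr' l s * Kgen n l - P tr' l s)).
  { unfold avg. rewrite Hsum. destruct (feas_link l m Hl) as [_ [? [? _]]].
    apply Rmult_le_pos; [left; apply Rinv_0_lt_compat, lt_0_INR; lia|lra]. }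
  assert (avg m (fun s => Sk tr' l s * Kgen n l) <= Kgen n l).
  { apply Rle_trans with (avg m (fun _ => Kgen n l)); [|rewrite avg_const by auto; lra].
    apply avg_le. intros s _. destruct (feas_link l s Hl) as [[-> | ->] _]; lra. }
  rewrite avg_minus in Hstore. lra.
Qed.

Lemma policy_queue_growth m a b : (a < nN n)%nat -> (b < nN n)%nat -> a <> b ->
  avg m (fun s => Radm tr' a b s + (inflow n tr' a b s - outflow n tr' a b s)) =
  / INR m * Q tr' a b m.
Proof.
  intros Ha Hb Hab. destruct Hfeas as [_ [Hqd _]]. destruct (Hqd a b Ha Hb) as [H0 Hdyn].
  unfold avg. f_equal. apply telescope; auto.
  intros s. rewrite (proj2 (Hdyn s) Hab). lra.
Qed.

Section Window.
Variable m : nat.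
Hypothesis Hm : (0 < m)%nat.

Lemma admission_vs_average t :
  dsum n (fun a b => Q tr a b t * Radm tr a b t) - V * dsum n (fun a b => U n a b (Radm tr a b t)) <=
  dsum n (fun a b => Q tr a b t * avg m (Radm tr' a b)) -
  V * dsum n (fun a b => U n a b (avg m (Radm tr' a b))).
Proof.
  rewrite <- !dsum_scal, <- !dsum_minus. apply dsum_le. intros a b Ha Hb.
  destruct (alg_admission a b t Ha Hb) as [_ Hopt].
  assert (0 <= avg m (Radm tr' a b) <= R_max n)
    by (apply avg_between; auto; intros s _; apply (feas_pair a b s Ha Hb)).
  specialize (Hopt _ H). lra.
Qed.

(* Key generation (1): S_l K_l replaced by the policy's average consumption. *)
Lemma keygen_vs_average t :
  sumR (links n) (fun l => (E tr l t - theta n beta V) * (Sk tr l t * Kgen n l - P tr l t)) <=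
  sumR (links n) (fun l => (E tr l t - theta n beta V) * avg m (P tr' l)) -
  sumR (links n) (fun l => (E tr l t - theta n beta V) * P tr l t).
Proof.
  rewrite <- sumR_minus. apply sumR_le. intros l Hl.
  pose proof (policy_key_rate m l Hm Hl) as Hp.
  destruct (alg_keygen l t Hl) as [G1 G2].
  destruct (Rlt_dec (E tr l t) (theta n beta V)) as [Hlt|Hge].
  - rewrite (G1 Hlt).
    assert ((E tr l t - theta n beta V) * Kgen n l <= (E tr l t - theta n beta V) * avg m (P tr' l))
      by (apply Rmult_le_compat_neg_l; lra).
    lra.
  - rewrite (G2 ltac:(lra)).
    assert (0 <= (E tr l t - theta n beta V) * avg m (P tr' l)) by (apply Rmult_le_pos; lra).
    lra.
Qed.

Lemma transmission_vs_policy_slot t s :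
  sumR (links n) (fun l => (E tr l t - theta n beta V) * P tr' l s) -
  dsum n (fun a b => Q tr a b t * (inflow n tr' a b s - outflow n tr' a b s)) -
  INR (Lnum n) * (gamma n * mumax n) <=
  P_objective n tr beta V t (fun l => P tr l t).
Proof.
  eapply Rle_trans;
    [|apply (power_allocation_dominates t (fun l => P tr' l s)); intros l Hl; apply (feas_link l s Hl)].
  rewrite (flow_identity n Hn tr' (fun a b => Q tr a b t) s).
  assert (Hlinks : sumR (links n) (fun l => (E tr l t - theta n beta V) * P tr' l s +
      sumR (nodes n) (fun b => mub tr' l b s * (Q tr (fst l) b t - Q tr (snd l) b t)) -
      gamma n * mumax n) <=
    sumR (links n) (fun l => mu n l (P tr' l s) * Wl n tr l t +
      (E tr l t - theta n beta V) * P tr' l s)).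
  { apply sumR_le. intros l Hl.
    pose proof (policy_routing_bound l t s Hl).
    destruct (feas_link l s Hl) as [_ [HP _]].
    destruct (mu_bounds n Hn l _ Hl HP) as [_ [Hm2 _]].
    pose proof (gamma_bounds n Hn) as [_ [Hg _]]. pose proof (Rmax_nonneg n Hn).
    assert (mu n l (P tr' l s) * gamma n <= mumax n * gamma n) by (apply Rmult_le_compat_r; lra).
    lra. }
  rewrite sumR_minus, sumR_plus, sumR_const in Hlinks. unfold Lnum. lra.
Qed.

Lemma transmission_vs_average t :
  sumR (links n) (fun l => (E tr l t - theta n beta V) * avg m (P tr' l)) -
  dsum n (fun a b => Q tr a b t * avg m (fun s => inflow n tr' a b s - outflow n tr' a b s)) -
  INR (Lnum n) * (gamma n * mumax n) <=
  P_objective n tr beta V t (fun l => P tr l t).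
Proof.
  replace (sumR (links n) (fun l => (E tr l t - theta n beta V) * avg m (P tr' l)))
    with (avg m (fun s => sumR (links n) (fun l => (E tr l t - theta n beta V) * P tr' l s)))
    by (rewrite avg_sum; apply sumR_ext; intros; rewrite <- avg_scal; reflexivity).
  replace (dsum n (fun a b => Q tr a b t * avg m (fun s => inflow n tr' a b s - outflow n tr' a b s)))
    with (avg m (fun s => dsum n (fun a b => Q tr a b t * (inflow n tr' a b s - outflow n tr' a b s))))
    by (rewrite (avg_dsum n m (fun a b s => Q tr a b t * (inflow n tr' a b s - outflow n tr' a b s)));
        apply dsum_ext; intros; apply avg_scal).
  rewrite <- (avg_const m (INR (Lnum n) * (gamma n * mumax n)) Hm) at 1.
  rewrite <- !avg_minus.
  rewrite <- (avg_const m (P_objective n tr beta V t (fun l => P tr l t)) Hm).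
  apply avg_le. intros s _. apply transmission_vs_policy_slot.
Qed.

(* The policy's average net arrivals, weighted by the bounded queues
   Q <= V beta + gamma, are controlled by its final backlog. *)
Lemma arrivals_vs_average t :
  dsum n (fun a b => Q tr a b t * avg m (Radm tr' a b)) +
  dsum n (fun a b => Q tr a b t * avg m (fun s => inflow n tr' a b s - outflow n tr' a b s)) <=
  (V * beta + gamma n) * (/ INR m * total_queue n tr' m).
Proof.
  rewrite <- dsum_plus. unfold total_queue. fold (dsum n (fun a b => Q tr' a b m)).
  rewrite <- !dsum_scal. apply dsum_le. intros a b Ha Hb.
  pose proof (queue_bounds t a b Ha Hb) as HQ.
  pose proof (proj2 (feas_pair a b m Ha Hb)) as HQ'.
  assert (Hinv : 0 < / INR m) by (apply Rinv_0_lt_compat, lt_0_INR; lia).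
  assert (0 <= (V * beta + gamma n) * (/ INR m * Q tr' a b m)) by (apply Rmult_le_pos; nra).
  destruct (Nat.eq_dec a b) as [<-|Hab].
  - rewrite alg_queue_diag by auto. lra.
  - rewrite <- Rmult_plus_distr_l, <- avg_plus, (policy_queue_growth m a b Ha Hb Hab).
    apply Rmult_le_compat_r; nra.
Qed.

Lemma slot_bound t :
  Lyap (S t) - Lyap t - V * dsum n (fun a b => U n a b (Radm tr a b t)) <=
  Bconst n + INR (Lnum n) * (gamma n * mumax n) +
  (V * beta + gamma n) * (/ INR m * total_queue n tr' m) -
  V * dsum n (fun a b => U n a b (avg m (Radm tr' a b))).
Proof.
  pose proof (drift_bound t) as Hd.
  replace (dsum n (fun a b => Q tr a b t * (Radm tr a b t + inflow n tr a b t - outflow n tr a b t)))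
    with (dsum n (fun a b => Q tr a b t * Radm tr a b t) +
          dsum n (fun a b => Q tr a b t * (inflow n tr a b t - outflow n tr a b t))) in Hd
    by (rewrite <- dsum_plus; apply dsum_ext; intros; ring).
  rewrite (flow_identity n Hn tr (fun a b => Q tr a b t) t) in Hd.
  pose proof (sumR_le _ _ _ (fun l Hl => routing_earns_weight l t Hl)) as Hroute.
  assert (Hobj : P_objective n tr beta V t (fun l => P tr l t) =
    sumR (links n) (fun l => mu n l (P tr l t) * Wl n tr l t) +
    sumR (links n) (fun l => (E tr l t - theta n beta V) * P tr l t)) by apply sumR_plus.
  pose proof (admission_vs_average t). pose proof (keygen_vs_average t).
  pose proof (transmission_vs_average t). pose proof (arrivals_vs_average t).
  lra.
Qed.

Lemma horizon_bound tau :
  Lyap tau - Lyap 0 -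
  V * sumR (seq 0 tau) (fun t => dsum n (fun a b => U n a b (Radm tr a b t))) <=
  INR tau * (Bconst n + INR (Lnum n) * (gamma n * mumax n) +
             (V * beta + gamma n) * (/ INR m * total_queue n tr' m) -
             V * dsum n (fun a b => U n a b (avg m (Radm tr' a b)))).
Proof.
  rewrite <- (telescope (fun t => Lyap t - Lyap 0)
    (fun t => Lyap (S t) - Lyap t)) by (intros; lra).
  rewrite <- sumR_scal, <- sumR_minus.
  rewrite <- (length_seq tau 0) at 2. rewrite <- sumR_const.
  apply sumR_le. intros t _. apply slot_bound.
Qed.

End Window.

Lemma utility_vs_policy_window m tau : (0 < m)%nat -> (0 < tau)%nat ->
  total_utility n (fun a b => avg_rate tr' a b m) - Btilde n / V -
  (V * beta + gamma n) / V * (/ INR m * total_queue n tr' m) -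
  Lyap 0 / V / INR tau <=
  total_utility n (fun a b => avg_rate tr a b tau).
Proof.
  intros Hm Htau.
  pose proof (horizon_bound m Hm tau) as Hh.
  pose proof (utility_of_average tau Htau) as HJ.
  pose proof (Lyap_nonneg tau).
  assert (Htp : 0 < INR tau) by (apply lt_0_INR; lia).
  assert (Hc : INR (Lnum n) * (gamma n * mumax n) <= Btilde n - Bconst n).
  { unfold Btilde. pose proof (Lnum_bound n Hn). pose proof (mumax_nonneg n Hn).
    pose proof (gamma_bounds n Hn) as [_ [Hg _]]. pose proof (Rmax_nonneg n Hn).
    replace (Bconst n + INR (nN n) ^ 2 * gamma n * INR (dmax n) * mumax n - Bconst n)
      with (INR (nN n) ^ 2 * INR (dmax n) * (gamma n * mumax n)) by ring.
    apply Rmult_le_compat_r; [apply Rmult_le_pos|]; lra. }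
  assert (Hcτ : INR tau * (INR (Lnum n) * (gamma n * mumax n)) <= INR tau * (Btilde n - Bconst n))
    by (apply Rmult_le_compat_l; lra).
  change (total_utility n (fun a b => avg_rate tr' a b m))
    with (dsum n (fun a b => U n a b (avg m (Radm tr' a b)))).
  unfold avg at 1 in HJ.
  set (S := sumR (seq 0 tau) (fun t => dsum n (fun a b => U n a b (Radm tr a b t)))) in *.
  set (UU := dsum n (fun a b => U n a b (avg m (Radm tr' a b)))) in *.
  set (q := / INR m * total_queue n tr' m) in *.
  set (Mq := (V * beta + gamma n) * q) in *.
  replace ((V * beta + gamma n) / V * q) with (Mq / V) by (unfold Mq; field; lra).
  apply Rle_trans with (/ INR tau * S); [|exact HJ].
  apply Rmult_le_reg_l with (V * INR tau); [nra|].
  replace (V * INR tau * (/ INR tau * S)) with (V * S) by (field; lra).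
  replace (V * INR tau * (UU - Btilde n / V - Mq / V - Lyap 0 / V / INR tau))
    with (V * INR tau * UU - INR tau * Btilde n - INR tau * Mq - Lyap 0) by (field; lra).
  lra.
Qed.

End Comparison.
End Algorithm.

Lemma policy_utility_converges n tr' rstar : valid_net n -> feasible_policy n tr' ->
  (forall a b, (a < nN n)%nat -> (b < nN n)%nat ->
     Un_cv (fun tau => avg_rate tr' a b (S tau)) (rstar a b)) ->
  eventually_ge (fun k => total_utility n (fun a b => avg_rate tr' a b (S k)))
                (total_utility n rstar).
Proof.
  intros Hn Hfeas Hr. unfold total_utility.
  apply eventually_ge_sum. intros a Ha. apply in_nodes in Ha.
  apply eventually_ge_sum. intros b Hb. apply in_nodes in Hb.
  apply concave_eventually_ge;
    [apply (U_concave n Hn a b Ha Hb)|apply (U_nondecr n Hn a b Ha Hb)| |apply Hr; auto].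
  intros k. apply Rmult_le_pos; [left; apply Rinv_0_lt_compat, lt_0_INR; lia|].
  apply sumR_nonneg. intros s _. apply (feas_pair n tr' Hfeas a b s Ha Hb).
Qed.

Lemma good_comparison_window n tr' rstar C eta : valid_net n -> feasible_policy n tr' ->
  (forall a b, (a < nN n)%nat -> (b < nN n)%nat ->
     Un_cv (fun tau => avg_rate tr' a b (S tau)) (rstar a b)) ->
  0 <= C -> 0 < eta ->
  exists m, (0 < m)%nat /\
    total_utility n rstar - eta <= total_utility n (fun a b => avg_rate tr' a b m) /\
    C * (/ INR m * total_queue n tr' m) <= eta.
Proof.
  intros Hn Hfeas Hr HC Heta.
  destruct (policy_utility_converges n tr' rstar Hn Hfeas Hr eta Heta) as [K HK].
  assert (Hq : forall t, 0 <= total_queue n tr' t).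
  { intros t. apply sumR_nonneg; intros a Ha; apply sumR_nonneg; intros b Hb.
    apply in_nodes in Ha, Hb. apply (feas_pair n tr' Hfeas a b t Ha Hb). }
  assert (Heta' : 0 < eta / (C + 1)) by (apply Rdiv_lt_0_compat; lra).
  destruct (bounded_average_small_often (total_queue n tr') Hq (proj2 (proj2 (proj2 (proj2 Hfeas))))
              (eta / (C + 1)) (S K) Heta') as [m [HKm [Hm Hsmall]]].
  destruct m as [|k]; [lia|]. exists (S k). split; [lia|]. split; [apply HK; lia|].
  assert (Hmp : 0 < INR (S k)) by (apply lt_0_INR; lia).
  assert (Hper : / INR (S k) * total_queue n tr' (S k) <= eta / (C + 1)).
  { apply Rmult_le_reg_l with (INR (S k)); [lra|].
    rewrite <- Rmult_assoc, Rinv_r by lra. lra. }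
  apply Rle_trans with (C * (eta / (C + 1))); [apply Rmult_le_compat_l; lra|].
  apply Rmult_le_reg_r with (C + 1); [lra|].
  replace (C * (eta / (C + 1)) * (C + 1)) with (C * eta) by (field; lra). nra.
Qed.

Theorem theorem3 (n : Net) (beta V : R) (tr : Traj)
    (Hn : valid_net n) (Hbeta : is_beta n beta) (HV : 0 < V)
    (Halg : follows_algorithm n beta V tr)
    (tr' : Traj) (rstar : nat -> nat -> R)
    (Hfeas : feasible_policy n tr')
    (Hr : forall a b, (a < nN n)%nat -> (b < nN n)%nat ->
         Un_cv (fun tau => avg_rate tr' a b (S tau)) (rstar a b)) :
  forall eps, 0 < eps ->
    exists T, forall tau, (T <= tau)%nat -> (0 < tau)%nat ->
      total_utility n (fun a b => avg_rate tr a b tau)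
      >= total_utility n rstar - Btilde n / V - eps.
Proof.
  intros eps Heps.
  set (C := (V * beta + gamma n) / V).
  assert (HC : 0 <= C).
  { pose proof (beta_nonneg n Hn beta Hbeta). pose proof (Rmax_nonneg n Hn).
    pose proof (gamma_bounds n Hn) as [_ [Hg _]].
    apply Rmult_le_pos; [nra|left; apply Rinv_0_lt_compat; lra]. }
  destruct (good_comparison_window n tr' rstar C (eps / 3) Hn Hfeas Hr HC ltac:(lra))
    as [m [Hm [Hutil Hbacklog]]].
  destruct (vanishing_over_time (Lyap n beta V tr 0 / V) (eps / 3) ltac:(lra)) as [T HT].
  exists T. intros tau HTtau Htau.
  pose proof (utility_vs_policy_window n beta V tr Hn Hbeta HV Halg tr' Hfeas m tau Hm Htau)
    as Hwindow.
  specialize (HT tau HTtau Htau). fold C in Hwindow. lra.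
Qed.
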